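(* For every integer $m\geq 1$, the graph $\mathcal{G}^2_{4m+1}$ is transmission irregular.
   Context: Let $G_2$ be the graph with vertices $a,b,c,d,e,f,g,h$ and edges $ab, ae, af, bc, bf, bg, cd, cg, dh, ef, fg, gh$. For an integer $n\ge 3$, $\mathcal{G}^2_n$ is obtained from $G_2$ by adding a new path from $e$ to $h$ with $n$ new internal vertices (a path $e,x_1,\dots,x_n,h$ of length $n+1$). The transmission of a vertex $u$ in a connected graph $G$ is $Tr_G(u)=\sum_{v}d_G(u,v)$; a graph is transmission irregular if no two of its vertices have equal transmission. *)

From mathcomp Require Import all_boot.
Set Implicit Arguments. Unset Strict Implicit. Unset Printing Implicit Defensive.

Section Graphs.
Variable T : finType.
Variable e : rel T.

Definition walk_of_len (k : nat) (u v : T) : bool :=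
  [exists p : k.-tuple T, path e u p && (last u p == v)].

(* graph distance: least k with a walk of length k from u to v
   (in a connected graph this is < #|T|, so the bounded search is exact) *)
Definition dist (u v : T) : nat :=
  find (fun k => walk_of_len k u v) (iota 0 #|T|).

Definition connected_graph : Prop := forall u v : T, connect e u v.

Definition transmission (u : T) : nat := \sum_(v : T) dist u v.

Definition transmission_irregular : Prop := injective transmission.
End Graphs.

(* The graph G^2_n.  Vertices are 'I_(n+8):
   a=0, b=1, c=2, d=3, e=4, f=5, g=6, h=7, and x_i = 7+i for 1 <= i <= n. *)
Definition G2_edges : seq (nat * nat) :=
  [:: (0,1); (0,4); (0,5); (1,2); (1,5); (1,6); (2,3); (2,6);
      (3,7); (4,5); (5,6); (6,7)].

(* the path e, x_1, ..., x_n, h *)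
Definition path_edges (n : nat) : seq (nat * nat) :=
  (4, 8) :: [seq (7 + i, 8 + i) | i <- iota 1 n.-1] ++ [:: (7 + n, 7)].

Definition G2n_edges (n : nat) : seq (nat * nat) := G2_edges ++ path_edges n.

Definition G2n_adj (n : nat) : rel 'I_(n + 8) :=
  fun i j => ((nat_of_ord i, nat_of_ord j) \in G2n_edges n)
          || ((nat_of_ord j, nat_of_ord i) \in G2n_edges n).
Arguments G2n_adj n : clear implicits.

(* With the numbering of G2n_adj (0..7 for a..h, 7 + i for x_i) the distances
   of G^2_n are explicit.  Between vertices of G_2 they are those of G_2, the
   new path being longer than d(e,h) = 3; a vertex w of G_2 reaches x_i
   through e or through h, at distance min(d(w,e) + i, d(w,h) + n + 1 - i);
   and two path vertices lie on the isometric cycle e x_1 ... x_n h g f of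
   length n + 4.  A function that vanishes at u, grows by at most one along
   each edge and drops along some edge into every other vertex is the
   distance from u, which certifies these formulas.  For n = 2q + 1 every
   transmission is then a sum of arithmetic progressions, split where the
   shorter route switches from e to h: it is q^2 + aq + b at the vertices of
   G_2 and q^2 plus a piecewise affine function of j at x_(j+1).  For even q
   these n + 8 values are pairwise distinct. *)

From mathcomp Require Import all_boot zify.
Set Implicit Arguments. Unset Strict Implicit. Unset Printing Implicit Defensive.

Section DistanceLabelling.
Variables (T : finType) (e : rel T) (u : T) (f : T -> nat).
Hypothesis f_root : f u = 0.
Hypothesis f_edge : forall x y, e x y -> f y <= (f x).+1.
Hypothesis f_descent : forall v, v != u -> exists2 w, e w v & f w < f v.

Lemma labelling_path_le x s : path e x s -> f (last x s) <= f x + size s.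
Proof.
elim: s x => [|y s IHs] x /=; first by rewrite addn0.
by case/andP=> /f_edge exy /IHs; lia.
Qed.

Lemma labelling_walk_le k v : walk_of_len e k u v -> f v <= k.
Proof.
by case/existsP=> p /andP[/labelling_path_le + /eqP <-]; rewrite f_root size_tuple.
Qed.

Lemma labelling_descending_path v :
  exists s, [/\ path e u s, last u s = v & map f s = iota 1 (f v)].
Proof.
suff: forall k v, f v = k -> exists s, [/\ path e u s, last u s = v & map f s = iota 1 k].
  by move/(_ _ v erefl).
elim=> [|k IHk] {}v fv; have [eq_vu | neq_vu] := eqVneq v u.
- by exists [::]; rewrite eq_vu.
- by have [w _] := f_descent neq_vu; rewrite fv.
- by rewrite eq_vu f_root in fv.
have [w ewv lt_wv] := f_descent neq_vu.
have fw : f w = k by have := f_edge ewv; lia.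
have [s [ps ls ms]] := IHk w fw.
exists (rcons s v); split; first by rewrite rcons_path ps ls.
  by rewrite last_rcons.
by rewrite map_rcons ms fv -cats1 -[k.+1]addn1 iotaD add1n addn1.
Qed.

Lemma labelling_walk v : walk_of_len e (f v) u v.
Proof.
have [s [ps ls ms]] := labelling_descending_path v.
have size_s : size s == f v by rewrite -(size_map f) ms size_iota.
by apply/existsP; exists (Tuple size_s); rewrite /= ps ls eqxx.
Qed.

Lemma labelling_lt_card v : f v < #|T|.
Proof.
have [s [_ _ ms]] := labelling_descending_path v.
have uniq_us : uniq (u :: s).
  by apply: (@map_uniq _ _ f); rewrite /= ms f_root; exact: (iota_uniq 0 (f v).+1).
by have := max_card (mem (u :: s)); rewrite (card_uniqP uniq_us) /= -(size_map f) ms size_iota.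
Qed.

Lemma dist_labelling v : dist e u v = f v.
Proof.
have fv_lt := labelling_lt_card v.
have has_walk : has (fun k => walk_of_len e k u v) (iota 0 #|T|).
  by apply/hasP; exists (f v); [rewrite mem_iota | apply: labelling_walk].
apply/eqP; rewrite eqn_leq; apply/andP; split.
  rewrite leqNgt; apply/negP => /(before_find 0).
  by rewrite nth_iota // add0n labelling_walk.
have find_lt : find (fun k => walk_of_len e k u v) (iota 0 #|T|) < #|T|.
  by rewrite -[X in _ < X](size_iota 0) -has_find.
by have := nth_find 0 has_walk; rewrite nth_iota // add0n => /labelling_walk_le.
Qed.

End DistanceLabelling.

Lemma sum_ramp_up a k c (F : nat -> nat) :
  (forall v, a <= v < a + k -> F v = c + (v - a).+1) ->
  (\sum_(a <= v < a + k) F v) * 2 = k * (c * 2 + k.+1).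
Proof.
move=> F_ramp; rewrite (eq_big_nat _ _ F_ramp); elim: k {F_ramp} => [|k IHk].
  by rewrite addn0 big_geq.
by rewrite addnS big_nat_recr ?leq_addr //= mulnDl IHk; lia.
Qed.

Lemma sum_ramp_down a k c (F : nat -> nat) :
  (forall v, a <= v < a + k -> F v = c + (a + k - v)) ->
  (\sum_(a <= v < a + k) F v) * 2 = k * (c * 2 + k.+1).
Proof.
by move=> F_ramp; rewrite big_nat_rev; apply: sum_ramp_up => v v_range; rewrite F_ramp; lia.
Qed.

Lemma sum_minn_ramps a k l c d :
  c + k <= d + l.+1 -> d + l <= c + k.+1 ->
  (\sum_(a <= v < a + k + l) minn (c + (v - a).+1) (d + (a + k + l - v))) * 2 =
  k * (c * 2 + k.+1) + l * (d * 2 + l.+1).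
Proof.
move=> cross_lo cross_hi; rewrite (big_cat_nat _ (n := a + k)) ?leq_addr //= mulnDl.
by congr (_ + _); [apply: sum_ramp_up | apply: sum_ramp_down] => v v_range; lia.
Qed.

Lemma sum_iota8 (F : nat -> nat) :
  \sum_(0 <= v < 8) F v = F 0 + F 1 + F 2 + F 3 + F 4 + F 5 + F 6 + F 7.
Proof. by rewrite /index_iota /= !big_cons big_nil !addnA addn0. Qed.

Definition core_dist (x y : nat) : nat :=
  nth 0 (nth [::] [:: [:: 0; 1; 2; 3; 1; 1; 2; 3]; [:: 1; 0; 1; 2; 2; 1; 1; 2];
      [:: 2; 1; 0; 1; 3; 2; 1; 2]; [:: 3; 2; 1; 0; 4; 3; 2; 1];
      [:: 1; 2; 3; 4; 0; 1; 2; 3]; [:: 1; 1; 2; 3; 1; 0; 1; 2];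
      [:: 2; 1; 1; 2; 2; 1; 0; 1]; [:: 3; 2; 2; 1; 3; 2; 1; 0]] x) y.

Definition core_adj (x y : nat) : bool := ((x, y) \in G2_edges) || ((y, x) \in G2_edges).

Lemma all_iota8 (P : pred nat) : all P (iota 0 8) -> forall x, x < 8 -> P x.
Proof. by move=> /allP allP x x_lt8; apply: allP; rewrite mem_iota. Qed.

Lemma core_dist_sym x y : x < 8 -> y < 8 -> core_dist x y = core_dist y x.
Proof.
move=> x_lt8 y_lt8; apply/eqP; move: y y_lt8; apply: all_iota8; move: x x_lt8.
by apply: all_iota8.
Qed.

Lemma core_dist_diag x : x < 8 -> core_dist x x = 0.
Proof. by move=> x_lt8; apply/eqP; move: x x_lt8; apply: all_iota8. Qed.

Lemma core_adj_lt8 x y : core_adj x y -> (x < 8) && (y < 8).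
Proof.
have edges_lt8 : all (fun p => (p.1 < 8) && (p.2 < 8)) G2_edges by [].
by case/orP=> /(allP edges_lt8) //=; rewrite andbC.
Qed.

Lemma core_dist_edge r x y : r < 8 -> core_adj x y -> core_dist r y <= (core_dist r x).+1.
Proof.
have lip : all (fun p => all (fun r =>
    (core_dist r p.2 <= (core_dist r p.1).+1) && (core_dist r p.1 <= (core_dist r p.2).+1))
  (iota 0 8)) G2_edges by [].
move=> r_lt8 /orP[] /(allP lip) /all_iota8 /(_ r r_lt8) /andP[] //.
Qed.

Lemma core_dist_descent r v : r < 8 -> v < 8 -> v != r ->
  exists2 w, w < 8 & core_adj w v && (core_dist r w < core_dist r v).
Proof.
have descent : all (fun r => all (fun v =>
    (v == r) || has (fun w => core_adj w v && (core_dist r w < core_dist r v)) (iota 0 8))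
  (iota 0 8)) (iota 0 8) by [].
move=> r_lt8 v_lt8 /negbTE v_neq_r.
have := all_iota8 (all_iota8 descent r_lt8) v_lt8.
by rewrite v_neq_r => /hasP[w]; rewrite mem_iota; exists w.
Qed.

Lemma core_dist_e_h r : r < 8 ->
  (core_dist r 7 <= core_dist r 4 + 3) && (core_dist r 4 <= core_dist r 7 + 3).
Proof.
move=> r_lt8; have e_r x y := @core_dist_edge r x y r_lt8.
have := e_r 4 5 isT; have := e_r 5 6 isT; have := e_r 6 7 isT.
have := e_r 7 6 isT; have := e_r 6 5 isT; have := e_r 5 4 isT.
lia.
Qed.

Definition path_edge (n x y : nat) : bool :=
  [|| (x == 4) && (y == 8), (8 <= x <= n + 6) && (y == x.+1) | (x == n + 7) && (y == 7)].

Lemma mem_path_edges n x y : 1 <= n -> ((x, y) \in path_edges n) = path_edge n x y.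
Proof.
move=> n_gt0; rewrite /path_edges /path_edge in_cons mem_cat mem_seq1 !xpair_eqE.
congr [|| _, _ | _]; last by rewrite addnC.
apply/mapP/idP => [[i] | /andP[x_range /eqP ->]].
  by rewrite mem_iota => i_range [-> ->]; lia.
by exists (x - 7); [rewrite mem_iota | congr pair]; lia.
Qed.

Definition G2n_edge (n x y : nat) : bool :=
  [|| core_adj x y, path_edge n x y | path_edge n y x].

Lemma G2n_adjE n (x y : 'I_(n + 8)) : 1 <= n -> G2n_adj n x y = G2n_edge n x y.
Proof.
move=> n_gt0; rewrite /G2n_adj /G2n_edges !mem_cat !mem_path_edges //.
by rewrite orbACA /G2n_edge /core_adj -orbA.
Qed.

Definition core_path_dist (n x v : nat) : nat :=
  minn (core_dist x 4 + (v - 7)) (core_dist x 7 + (n + 8 - v)).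

Definition path_dist (n v w : nat) : nat :=
  minn ((v - w) + (w - v)) (n + 4 - ((v - w) + (w - v))).

Definition G2n_dist (n x y : nat) : nat :=
  if x < 8 then (if y < 8 then core_dist x y else core_path_dist n x y)
  else if y < 8 then core_path_dist n y x else path_dist n x y.

Lemma G2n_dist_core n x y : x < 8 -> y < 8 -> G2n_dist n x y = core_dist x y.
Proof. by rewrite /G2n_dist => -> ->. Qed.

Lemma G2n_dist_core_path n x y : x < 8 -> 8 <= y -> G2n_dist n x y = core_path_dist n x y.
Proof. by move=> x_lt y_ge; rewrite /G2n_dist x_lt ltnNge y_ge. Qed.

Lemma G2n_dist_path_core n x y : 8 <= x -> y < 8 -> G2n_dist n x y = core_path_dist n y x.
Proof. by move=> x_ge y_lt; rewrite /G2n_dist ltnNge x_ge y_lt. Qed.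

Lemma G2n_dist_path n x y : 8 <= x -> 8 <= y -> G2n_dist n x y = path_dist n x y.
Proof. by move=> x_ge y_ge; rewrite /G2n_dist (ltnNge x) (ltnNge y) x_ge y_ge. Qed.

(* [simpl] leaves [core_dist 4 7] folded; [cbn] evaluates it. *)
Ltac G2n_dist_lia := rewrite /G2n_dist /core_path_dist /path_dist /G2n_edge /path_edge;
  cbn [core_dist nth] in * => /=; repeat case: ifP; lia.

Section G2nDistance.
Variable n : nat.
Hypothesis n_ge2 : 2 <= n.

Lemma G2n_dist_core_edge u x y : core_adj x y -> G2n_dist n u y <= (G2n_dist n u x).+1.
Proof.
move=> xy; have /andP[x_lt8 y_lt8] := core_adj_lt8 xy.
rewrite /G2n_dist x_lt8 y_lt8; case: ifP => [u_lt8 | /negbT u_ge8].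
  exact: core_dist_edge.
have dist_to r := @core_dist_edge r x y.
rewrite /core_path_dist !(core_dist_sym _ (isT : 4 < 8)) //.
rewrite !(core_dist_sym _ (isT : 7 < 8)) //.
by have := dist_to 4 isT xy; have := dist_to 7 isT xy; lia.
Qed.

Lemma G2n_dist_path_edge u x y : u < n + 8 -> path_edge n x y ->
  G2n_dist n u y <= (G2n_dist n u x).+1 /\ G2n_dist n u x <= (G2n_dist n u y).+1.
Proof.
move=> u_lt xy.
have [u_lt8 | u_ge8] := ltnP u 8; first have := core_dist_e_h u_lt8.
all: case/or3P: xy => [/andP[/eqP-> /eqP->] | /andP[x_range /eqP->] | /andP[/eqP-> /eqP->]] /=.
all: G2n_dist_lia.
Qed.

Lemma G2n_dist_edge u x y : u < n + 8 -> G2n_edge n x y ->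
  G2n_dist n u y <= (G2n_dist n u x).+1.
Proof.
move=> u_lt /or3P[/G2n_dist_core_edge // | /(G2n_dist_path_edge u_lt)[] //|].
by case/(G2n_dist_path_edge u_lt).
Qed.

Lemma G2n_descent_core_path u v : u < 8 -> 8 <= v < n + 8 ->
  exists2 w, w < n + 8 & G2n_edge n w v && (G2n_dist n u w < G2n_dist n u v).
Proof.
move=> u_lt8 v_range.
have [via_e | via_h] := leqP (core_dist u 4 + (v - 7)) (core_dist u 7 + (n + 8 - v)).
  have [-> | v_ne8] := eqVneq v 8; [exists 4 | exists (v - 1)]; G2n_dist_lia.
have [-> | v_ne] := eqVneq v (n + 7); [exists 7 | exists v.+1]; G2n_dist_lia.
Qed.

Lemma G2n_descent_path_core u v : 8 <= u < n + 8 -> v < 8 ->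
  exists2 w, w < n + 8 & G2n_edge n w v && (G2n_dist n u w < G2n_dist n u v).
Proof.
move=> u_range v_lt8.
have [via_e | via_h] := leqP (core_dist v 4 + (u - 7)) (core_dist v 7 + (n + 8 - u)).
  have [v4 | v_ne4] := eqVneq v 4; first by subst v; exists 8; G2n_dist_lia.
  have [w w_lt8 /andP[wv w_closer]] := core_dist_descent (isT : 4 < 8) v_lt8 v_ne4.
  rewrite -(core_dist_sym w_lt8) // -(core_dist_sym v_lt8) // in w_closer.
  by exists w; [lia | rewrite /G2n_edge wv; G2n_dist_lia].
have [v7 | v_ne7] := eqVneq v 7; first by subst v; exists (n + 7); G2n_dist_lia.
have [w w_lt8 /andP[wv w_closer]] := core_dist_descent (isT : 7 < 8) v_lt8 v_ne7.
rewrite -(core_dist_sym w_lt8) // -(core_dist_sym v_lt8) // in w_closer.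
by exists w; [lia | rewrite /G2n_edge wv; G2n_dist_lia].
Qed.

Lemma G2n_descent_path u v : 8 <= u < n + 8 -> 8 <= v < n + 8 -> v != u ->
  exists2 w, w < n + 8 & G2n_edge n w v && (G2n_dist n u w < G2n_dist n u v).
Proof.
move=> u_range v_range v_ne_u.
have [u_lt_v | v_lt_u] := ltnP u v.
  have [direct | wrapped] := leqP (v - u).*2 (n + 4); first by exists (v - 1); G2n_dist_lia.
  by have [-> | v_ne] := eqVneq v (n + 7); [exists 7 | exists v.+1]; G2n_dist_lia.
have [direct | wrapped] := leqP (u - v).*2 (n + 4); first by exists v.+1; G2n_dist_lia.
by have [-> | v_ne8] := eqVneq v 8; [exists 4 | exists (v - 1)]; G2n_dist_lia.
Qed.

Lemma G2n_dist_descent u v : u < n + 8 -> v < n + 8 -> v != u ->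
  exists2 w, w < n + 8 & G2n_edge n w v && (G2n_dist n u w < G2n_dist n u v).
Proof.
move=> u_lt v_lt v_ne_u.
have [u_lt8 | u_ge8] := ltnP u 8; have [v_lt8 | v_ge8] := ltnP v 8.
- have [w w_lt8 /andP[wv w_closer]] := core_dist_descent u_lt8 v_lt8 v_ne_u.
  by exists w; [lia | rewrite /G2n_edge wv; G2n_dist_lia].
- by apply: G2n_descent_core_path; rewrite ?v_ge8.
- by apply: G2n_descent_path_core; rewrite ?u_ge8.
- by apply: G2n_descent_path; rewrite ?u_ge8 ?v_ge8.
Qed.

Lemma G2n_dist_diag u : G2n_dist n u u = 0.
Proof.
by rewrite /G2n_dist /path_dist; case: ltnP => [/core_dist_diag -> | _] //; lia.
Qed.

End G2nDistance.

Lemma G2n_distE n (u v : 'I_(n + 8)) : 2 <= n -> dist (G2n_adj n) u v = G2n_dist n u v.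
Proof.
move=> n_ge2; apply: (dist_labelling (f := fun v : 'I_(n + 8) => G2n_dist n u v)).
- exact: G2n_dist_diag.
- by move=> x y; rewrite G2n_adjE; [apply: G2n_dist_edge | lia].
- move=> {}v v_ne_u.
  have [w w_lt /andP[wv w_closer]] := G2n_dist_descent n_ge2 (ltn_ord u) (ltn_ord v) v_ne_u.
  by exists (Ordinal w_lt); rewrite // G2n_adjE; last lia.
Qed.

Lemma sum_G2n_dist_core_ramps n u k l : u < 8 -> n = k + l ->
  core_dist u 4 + k <= core_dist u 7 + l.+1 -> core_dist u 7 + l <= core_dist u 4 + k.+1 ->
  (\sum_(0 <= v < n + 8) G2n_dist n u v) * 2 =
  (\sum_(0 <= v < 8) core_dist u v) * 2 +
  k * (core_dist u 4 * 2 + k.+1) + l * (core_dist u 7 * 2 + l.+1).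
Proof.
move=> u_lt8 n_def cross_lo cross_hi.
have -> : n + 8 = 8 + k + l by lia.
rewrite (big_cat_nat _ (n := 8)) ?leq_addr //= mulnDl -[RHS]addnA.
rewrite -(sum_minn_ramps 8 cross_lo cross_hi).
congr (_ * 2 + _ * 2); apply: eq_big_nat => v /andP[v_lo v_hi].
  by rewrite G2n_dist_core.
by rewrite G2n_dist_core_path // /core_path_dist; congr minn; lia.
Qed.

Definition core_tr (q u : nat) : nat :=
  q * q + nth 0 [:: 6 * q + 15; 6 * q + 13; 7 * q + 15; 7 * q + 17;
                    5 * q + 16; 5 * q + 13; 5 * q + 12; 5 * q + 14] u.

Lemma sum_G2n_dist_core n q u : n = q.*2.+1 -> 1 <= q -> u < 8 ->
  \sum_(0 <= v < n + 8) G2n_dist n u v = core_tr q u.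
Proof.
case: q => [//|p] n_def _; have sum_at u k l := @sum_G2n_dist_core_ramps n u k l.
(* u reaches k path vertices faster through e, the other l through h *)
case: u => [|[|[|[|[|[|[|[|//]]]]]]]] _;
  [ move: (sum_at 0 (p + 3) p) | move: (sum_at 1 (p + 2) p.+1) | move: (sum_at 2 p.+1 (p + 2))
  | move: (sum_at 3 p (p + 3)) | move: (sum_at 4 (p + 3) p) | move: (sum_at 5 (p + 2) p.+1)
  | move: (sum_at 6 p.+1 (p + 2)) | move: (sum_at 7 p (p + 3)) ].
all: rewrite sum_iota8 /core_tr; cbn [core_dist nth]; lia.
Qed.

Lemma sum_path_dist_rev n j : j < n ->
  \sum_(8 <= v < n + 8) path_dist n (8 + j) v =
  \sum_(8 <= v < n + 8) path_dist n (8 + (n - j.+1)) v.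
Proof.
move=> j_lt; rewrite [RHS]big_nat_rev; apply: eq_big_nat => v v_range.
by rewrite /path_dist; congr minn; lia.
Qed.

Lemma sum_path_dist_direct n j k : n = j + k.+1 -> j * 2 <= n + 4 -> k * 2 <= n + 4 ->
  (\sum_(8 <= v < n + 8) path_dist n (8 + j) v) * 2 = j * j.+1 + k * k.+1.
Proof.
move=> n_def near_lo near_hi; have -> : n + 8 = (8 + j).+1 + k by lia.
rewrite (big_cat_nat _ (n := (8 + j).+1)); [|lia|lia].
rewrite (big_cat_nat _ (n := 8 + j)); [|lia|lia].
have lo : (\sum_(8 <= v < 8 + j) path_dist n (8 + j) v) * 2 = j * (0 * 2 + j.+1).
  by apply: sum_ramp_down => v v_range; rewrite /path_dist; lia.
have hi : (\sum_((8 + j).+1 <= v < (8 + j).+1 + k) path_dist n (8 + j) v) * 2 =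
           k * (0 * 2 + k.+1).
  by apply: sum_ramp_up => v v_range; rewrite /path_dist; lia.
rewrite big_nat1 !mulnDl lo hi /path_dist; lia.
Qed.

(* Seen from x_(j+1), distances along the path go down to 0, up to the
   vertices farthest away on the cycle of length n + 4, then down again. *)
Lemma sum_path_dist_wrapped n j t : n = (j + t).*2 + 5 ->
  (\sum_(8 <= v < n + 8) path_dist n (8 + j) v) * 2 =
  j * j.+1 + (j + t + 4) * (j + t + 5) + t * ((j + 4) * 2 + t.+1).
Proof.
move=> n_def; have -> : n + 8 = (8 + j).+1 + (j + t + 4) + t by lia.
rewrite (big_cat_nat _ (n := (8 + j).+1 + (j + t + 4))); [|lia|lia].
rewrite (big_cat_nat _ (n := (8 + j).+1)); [|lia|lia].
rewrite (big_cat_nat _ (n := 8 + j)); [|lia|lia].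
have lo : (\sum_(8 <= v < 8 + j) path_dist n (8 + j) v) * 2 = j * (0 * 2 + j.+1).
  by apply: sum_ramp_down => v v_range; rewrite /path_dist; lia.
have mid : (\sum_((8 + j).+1 <= v < (8 + j).+1 + (j + t + 4)) path_dist n (8 + j) v) * 2 =
           (j + t + 4) * (0 * 2 + (j + t + 4).+1).
  by apply: sum_ramp_up => v v_range; rewrite /path_dist; lia.
have hi : (\sum_((8 + j).+1 + (j + t + 4) <= v < (8 + j).+1 + (j + t + 4) + t)
             path_dist n (8 + j) v) * 2 = t * ((j + 4) * 2 + t.+1).
  by apply: sum_ramp_down => v v_range; rewrite /path_dist; lia.
rewrite big_nat1 !mulnDl lo mid hi /path_dist; lia.
Qed.

Definition path_tr (q j : nat) : nat :=
  if j + 2 <= q then q * q + 5 * q + 20 + 4 * j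
  else if j.+1 == q then q * q + 9 * q + 15
  else if j == q then q * q + 9 * q + 16
  else q * q + 13 * q + 18 - 4 * j.

Lemma sum_G2n_dist_path n q j : n = q.*2.+1 -> 2 <= q -> j < n ->
  \sum_(0 <= v < n + 8) G2n_dist n (8 + j) v = path_tr q j.
Proof.
move=> n_def q_ge2 j_lt.
have core_part : \sum_(0 <= v < 8) G2n_dist n (8 + j) v =
                 \sum_(0 <= v < 8) core_path_dist n v (8 + j).
  by apply: eq_big_nat => v /andP[_ v_lt8]; rewrite G2n_dist_path_core ?leq_addr.
have path_part : \sum_(8 <= v < n + 8) G2n_dist n (8 + j) v =
                 \sum_(8 <= v < n + 8) path_dist n (8 + j) v.
  by apply: eq_big_nat => v /andP[v_ge8 _]; rewrite G2n_dist_path ?leq_addr.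
rewrite (big_cat_nat _ (n := 8)) ?leq_addl //= core_part path_part sum_iota8.
rewrite /core_path_dist /path_tr; cbn [core_dist nth].
case: ifP => [low | /negbT not_low]; last case: eqP => [j_prev | j_not_prev].
- have [t q_def] : exists t, q = j + t + 2 by exists (q - j - 2); lia.
  by have := @sum_path_dist_wrapped n j t; subst; lia.
- by have := @sum_path_dist_direct n j (j + 2); subst; lia.
case: eqP => [j_eq | j_ne]; first by have := @sum_path_dist_direct n j j; subst; lia.
have [j_next | j_far] : j = q.+1 \/ q + 2 <= j by lia.
  have [k q_def] : exists k, q = k.+1 by exists q.-1; lia.
  by have := @sum_path_dist_direct n j k; subst; lia.
have [t [s [q_def j_def]]] : exists t s, q = t + s + 2 /\ j = t + s.*2 + 4.
  by exists (q.*2 - j), (j - q - 2); lia.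
rewrite sum_path_dist_rev //; have -> : n - j.+1 = t by lia.
by have := @sum_path_dist_wrapped n t s; subst; lia.
Qed.

Definition G2n_tr (q x : nat) : nat := if x < 8 then core_tr q x else path_tr q (x - 8).

Lemma transmission_G2n n q (u : 'I_(n + 8)) : n = q.*2.+1 -> 2 <= q ->
  transmission (G2n_adj n) u = G2n_tr q u.
Proof.
move=> n_def q_ge2.
have -> : transmission (G2n_adj n) u = \sum_(0 <= v < n + 8) G2n_dist n u v.
  by rewrite /transmission big_mkord; apply: eq_bigr => v _; rewrite G2n_distE //; lia.
rewrite /G2n_tr; case: ltnP => [u_lt8 | u_ge8]; first by rewrite (sum_G2n_dist_core n_def) //; lia.
by rewrite -{1}(subnKC u_ge8) (sum_G2n_dist_path n_def) //; have := ltn_ord u; lia.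
Qed.

(* Parity matters: for q = 3 the vertices b and e both have transmission 40. *)
Lemma G2n_tr_inj q x y : 2 <= q -> ~~ odd q -> x < q.*2 + 9 -> y < q.*2 + 9 ->
  G2n_tr q x = G2n_tr q y -> x = y.
Proof.
move=> q_ge2 q_even x_lt y_lt.
have [m q_def] : exists m, q = m.*2 by exists q./2; rewrite -[LHS]odd_double_half (negbTE q_even).
subst q; rewrite /G2n_tr /path_tr; case: (ltnP x 8) => x_lt8; case: (ltnP y 8) => y_lt8.
- case: x x_lt8 {x_lt} => [|[|[|[|[|[|[|[|//]]]]]]]] _;
  case: y y_lt8 {y_lt} => [|[|[|[|[|[|[|[|//]]]]]]]] _; rewrite /core_tr /=; lia.
- case: x x_lt8 {x_lt} => [|[|[|[|[|[|[|[|//]]]]]]]] _; rewrite /core_tr /=; repeat case: ifP; lia.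
- case: y y_lt8 {y_lt} => [|[|[|[|[|[|[|[|//]]]]]]]] _; rewrite /core_tr /=; repeat case: ifP; lia.
- repeat case: ifP; lia.
Qed.

Theorem proposition2 (m : nat) :
  1 <= m -> transmission_irregular (G2n_adj (4 * m + 1)).
Proof.
move=> m_ge1 u v; rewrite !(transmission_G2n (q := m.*2)); try lia.
move=> tr_eq; apply: val_inj; apply: (G2n_tr_inj _ _ _ _ tr_eq); rewrite ?odd_double //.
all: have := ltn_ord u; have := ltn_ord v; lia.
Qed.
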